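(* Let $m,n\ge 3$ be integers. If $m$ and $n$ are both even, then $\chi_{ei}(C_m\square C_n)=2$. If $m\ge 4$, $m\notin\{5,7\}$, $n$ is odd and $n\ge 9$, then $\chi_{ei}(C_m\square C_n)=3$.
   Context: All graphs are finite and simple. $C_k$ denotes the cycle on $k$ vertices. A path $P_4$ in $G$ is a sequence $uxyv$ of four distinct vertices with $ux,xy,yv\in E(G)$; $u,v$ are its end vertices. An $e$-injective $k$-coloring of $G$ is a function $f:V(G)\to\{1,\dots,k\}$ with $f(u)\ne f(v)$ whenever $u,v$ are the end vertices of some path $P_4$ in $G$; $\chi_{ei}(G)$ is the least such $k$. In the Cartesian product $G\square H$ two vertices are adjacent if they are adjacent in one coordinate and equal in the other. *)

From mathcomp Require Import all_boot.
Set Implicit Arguments. Unset Strict Implicit. Unset Printing Implicit Defensive.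

Definition cycle_rel (k : nat) : rel 'I_k :=
  fun i j => ((i.+1 %% k) == j) || ((j.+1 %% k) == i).

Definition cart_rel (A B : finType) (eA : rel A) (eB : rel B) : rel (A * B) :=
  fun p q => (eA p.1 q.1 && (p.2 == q.2)) || ((p.1 == q.1) && eB p.2 q.2).

Definition P4_ends (T : finType) (e : rel T) (u v : T) : Prop :=
  exists x y : T, [/\ uniq [:: u; x; y; v], e u x, e x y & e y v].

Definition ei_coloring (T : finType) (e : rel T) (k : nat) (f : T -> 'I_k) : Prop :=
  forall u v : T, P4_ends e u v -> f u <> f v.

Definition ei_colorable (T : finType) (e : rel T) (k : nat) : Prop :=
  exists f : T -> 'I_k, ei_coloring e f.

Definition chi_ei_eq (T : finType) (e : rel T) (k : nat) : Prop :=
  ei_colorable e k /\ forall k', k' < k -> ~ ei_colorable e k'.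

Definition torus_rel (m n : nat) : rel ('I_m * 'I_n) :=
  cart_rel (@cycle_rel m) (@cycle_rel n).
Arguments torus_rel : clear implicits.

From mathcomp Require Import all_boot zmodp zify.
Set Implicit Arguments. Unset Strict Implicit. Unset Printing Implicit Defensive.

(* Upper bounds: fold each factor cycle onto C_p (onto one edge if it is even,
   winding once around C_p first if it is odd) and add the two coordinates mod
   p; this maps the torus homomorphically onto C_p (p = 2 or p = 9).  A
   homomorphism sends a P4 to a walk of length 3, so any coloring of C_p that
   separates the ends of all 3-walks pulls back to an e-injective coloring:
   the identity on C_2, and on C_9 a 3-coloring in which vertices at distance
   1 or 3 differ.
   Lower bounds: for edges i ~ i' of C_m and j ~ j' of C_n, the square
   (i,j) (i',j) (i',j') (i,j') is a P4, so every row of an e-injective coloring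
   is a proper coloring of C_n, which needs 3 colors when n is odd. *)

Definition walk3_separating (U : Type) (e : rel U) k (c : U -> 'I_k) : Prop :=
  forall u x y v, e u x -> e x y -> e y v -> c u != c v.

Definition proper_coloring (T : finType) (e : rel T) k (f : T -> 'I_k) : Prop :=
  forall x y, e x y -> f x <> f y.

Lemma ei_coloring_comp (T U : finType) (e : rel T) (e' : rel U) k
    (h : T -> U) (c : U -> 'I_k) :
  {homo h : x y / e x y >-> e' x y} -> walk3_separating e' c ->
  ei_coloring e (c \o h).
Proof.
move=> hom_h sep u v [x [y [_ ux xy yv]]]; apply/eqP.
by apply: (sep _ (h x) (h y)); apply: hom_h.
Qed.

Lemma ei_colorable_gt1 (T : finType) (e : rel T) k u v :
  P4_ends e u v -> ei_colorable e k -> 1 < k.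
Proof.
move=> uv [f /(_ u v uv)]; case: k f => [|[|//]] f; first by case: (f u).
by rewrite !ord1.
Qed.

Lemma P4_ends_cart_square (A B : finType) (eA : rel A) (eB : rel B) a a' b b' :
  symmetric eA -> eA a a' -> a != a' -> eB b b' -> b != b' ->
  P4_ends (cart_rel eA eB) (a, b) (a, b').
Proof.
move=> symA aa' na bb' nb; exists (a', b), (a', b'); split.
- by rewrite /= !inE !xpair_eqE !eqxx (negbTE na) (eq_sym a') (negbTE na) (negbTE nb).
- by rewrite /cart_rel /= aa' eqxx.
- by rewrite /cart_rel /= bb' eqxx orbT.
- by rewrite /cart_rel /= symA aa' eqxx.
Qed.

Lemma ei_coloring_cart_row (A B : finType) (eA : rel A) (eB : rel B) k
    (f : A * B -> 'I_k) a a' :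
  ei_coloring (cart_rel eA eB) f -> symmetric eA -> eA a a' -> a != a' ->
  irreflexive eB -> proper_coloring eB (fun b => f (a, b)).
Proof.
move=> hf symA aa' na irrB b b' bb'; apply: hf.
have nb : b != b' by apply: contraTneq bb' => ->; rewrite irrB.
exact: (P4_ends_cart_square symA aa' na bb' nb).
Qed.

Lemma cycle_relC k : symmetric (@cycle_rel k).
Proof. by move=> i j; rewrite /cycle_rel orbC. Qed.

Lemma cycle_rel_irr k : 1 < k -> irreflexive (@cycle_rel k).
Proof.
move=> k_gt1 i; rewrite /cycle_rel orbb; apply/negbTE.
have := ltn_ord i; case: (ltnP i.+1 k) => [lt_ik|le_ki] lt_i.
  by rewrite modn_small // (gtn_eqF (ltnSn i)).
by rewrite (_ : i.+1 = k) ?modnn; lia.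
Qed.

Lemma cycle_rel_neq k (i j : 'I_k) : 1 < k -> cycle_rel i j -> i != j.
Proof. by move=> k_gt1; apply: contraTneq => ->; rewrite cycle_rel_irr. Qed.

Lemma cycle_has_edge k : 1 < k -> exists i j : 'I_k, cycle_rel i j.
Proof.
move=> k_gt1; exists (Ordinal (ltnW k_gt1)), (Ordinal k_gt1).
by rewrite /cycle_rel /= modn_small ?eqxx.
Qed.

Lemma ord2_neq_odd (x y : 'I_2) : x <> y -> odd y = ~~ odd x.
Proof.
by case: x y => [[|[|//]] ?] [[|[|//]] ?] // neq; case: neq; apply: val_inj.
Qed.

Lemma cycle_rel_homo k l (g : nat -> 'I_l) :
  (forall i, i.+1 < k -> cycle_rel (g i) (g i.+1)) ->
  (0 < k -> cycle_rel (g k.-1) (g 0)) ->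
  {homo (fun i : 'I_k => g i) : i j / cycle_rel i j}.
Proof.
move=> step wrap.
suff succ (i j : 'I_k) : i.+1 %% k = j -> cycle_rel (g i) (g j).
  by move=> i j /orP[]/eqP/succ //; rewrite cycle_relC.
move=> <-; have := ltn_ord i; case: (ltnP i.+1 k) => [lt_ik _|le_ki lt_ik].
  by rewrite modn_small //; apply: step.
have -> : i = k.-1 :> nat by lia.
by rewrite prednK ?modnn; [apply: wrap|]; lia.
Qed.

(* Winds once around C_p when k is odd, then bounces on the edge {0, 1}. *)
Definition cycle_fold (p k i : nat) : nat :=
  let q := if odd k then p else 0 in if i < q then i else (i - q) %% 2.

Section CycleTarget.

Variable p' : nat.
Local Notation p := p'.+1.

Lemma cycle_rel_inordS a : a.+1 < p -> cycle_rel (inord a : 'I_p) (inord a.+1).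
Proof. by move=> lt_ap; apply/orP; left; rewrite !inordK ?modn_small //; lia. Qed.

Lemma cycle_rel_inord_wrap : cycle_rel (inord p' : 'I_p) (inord 0).
Proof. by rewrite /cycle_rel !inordK ?modnn. Qed.

Lemma cycle_rel_inord_mod2 j : 1 < p ->
  cycle_rel (inord (j %% 2) : 'I_p) (inord (j.+1 %% 2)).
Proof.
move=> p_gt1; rewrite !modn2 /=.
by case: odd; [rewrite cycle_relC|]; apply: cycle_rel_inordS.
Qed.

Definition cycle_fold_ord k (i : 'I_k) : 'I_p := inord (cycle_fold p k i).

Lemma cycle_fold_homo k : 1 < p -> (odd k -> odd p && (p <= k)) ->
  {homo @cycle_fold_ord k : i j / cycle_rel i j}.
Proof.
move=> p_gt1 odd_k.
apply: (cycle_rel_homo (g := fun i => inord (cycle_fold p k i))) => [i lt_ik|k_gt0].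
  rewrite /cycle_fold; case: (boolP (odd k)) => [/odd_k/andP[_ le_pk]|_] /=.
    case: (ltngtP i.+1 p) => [lt_ip|lt_pi|[->]].
    - exact: cycle_rel_inordS.
    - by rewrite subSn //; apply: cycle_rel_inord_mod2.
    - by rewrite subnn; apply: cycle_rel_inord_wrap.
  by rewrite !subn0; apply: cycle_rel_inord_mod2.
rewrite /cycle_fold; case: (boolP (odd k)) => [odd_k'|even_k] /=.
  move/andP: (odd_k odd_k') => [odd_p le_pk]; case: (ltnP k.-1 p) => [lt_kp|le_pk'].
    by rewrite (_ : k.-1 = p'); [apply: cycle_rel_inord_wrap|lia].
  by rewrite (_ : (k.-1 - p) %% 2 = 1) 1?cycle_relC; [apply: cycle_rel_inordS|lia].
by rewrite subn0 (_ : k.-1 %% 2 = 1) 1?cycle_relC; [apply: cycle_rel_inordS|lia].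
Qed.

Lemma Zp_add_cycle_rel (a b c : 'I_p) :
  cycle_rel a b -> cycle_rel (Zp_add a c) (Zp_add b c).
Proof.
have succD (x y : 'I_p) : x.+1 %% p = y -> (Zp_add x c).+1 %% p = Zp_add y c.
  by move=> /= <-; rewrite -addn1 !modnDml addn1 addSn.
by move=> /orP[]/eqP/succD; rewrite /cycle_rel => ->; rewrite eqxx ?orbT.
Qed.

Lemma cart_Zp_add_homo (A B : finType) (eA : rel A) (eB : rel B)
    (hA : A -> 'I_p) (hB : B -> 'I_p) :
  {homo hA : x y / eA x y >-> cycle_rel x y} ->
  {homo hB : x y / eB x y >-> cycle_rel x y} ->
  {homo (fun x : A * B => Zp_add (hA x.1) (hB x.2)) :
     x y / cart_rel eA eB x y >-> cycle_rel x y}.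
Proof.
move=> homA homB [a b] [a' b'] /orP[]/andP[] /=.
  by move=> e /eqP <-; apply/Zp_add_cycle_rel/homA.
by move=> /eqP <- e; rewrite ![Zp_add (hA a) _]Zp_addC; apply/Zp_add_cycle_rel/homB.
Qed.

Lemma torus_ei_colorable m n k (c : 'I_p -> 'I_k) : 1 < p ->
  (odd m -> odd p && (p <= m)) -> (odd n -> odd p && (p <= n)) ->
  walk3_separating (@cycle_rel p) c -> ei_colorable (torus_rel m n) k.
Proof.
move=> p_gt1 odd_m odd_n sep_c.
exists (c \o fun x : 'I_m * 'I_n => Zp_add (cycle_fold_ord x.1) (cycle_fold_ord x.2)).
by apply: ei_coloring_comp sep_c; apply: cart_Zp_add_homo; apply: cycle_fold_homo.
Qed.

Definition cycle_step (b : bool) : 'I_p := if b then Zp1 else Zp_opp Zp1.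

Lemma cycle_rel_step (i j : 'I_p) :
  cycle_rel i j -> exists b, j = Zp_add i (cycle_step b).
Proof.
have succ (x y : 'I_p) : x.+1 %% p = y -> y = Zp_add x Zp1.
  by move=> xy; apply: val_inj; rewrite /= modnDmr addn1.
case/orP=> /eqP/succ ->; first by exists true.
by exists false; rewrite -Zp_addA (Zp_addC Zp1) Zp_addNz Zp_addC Zp_add0z.
Qed.

Lemma cycle_walk3_separating k (c : 'I_p -> 'I_k) :
  (forall u b1 b2 b3, c u != c (Zp_add (Zp_add (Zp_add u (cycle_step b1))
                                                (cycle_step b2)) (cycle_step b3))) ->
  walk3_separating (@cycle_rel p) c.
Proof.
by move=> hc u x y v /cycle_rel_step[b1 ->] /cycle_rel_step[b2 ->]
  /cycle_rel_step[b3 ->].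
Qed.

End CycleTarget.

Lemma C2_separating : walk3_separating (@cycle_rel 2) id.
Proof.
apply: (@cycle_walk3_separating 1) => u b1 b2 b3.
by case: u => [[|[|//]] ?]; case: b1; case: b2; case: b3.
Qed.

(* Vertices of C_9 at distance 1 or 3, the possible ends of a 3-walk, get
   distinct colors. *)
Definition C9_coloring (i : 'I_9) : 'I_3 :=
  inZp (nth 0 [:: 0; 2; 0; 1; 0; 1; 2; 1; 2] i).

Lemma C9_coloring_separating : walk3_separating (@cycle_rel 9) C9_coloring.
Proof.
apply: (@cycle_walk3_separating 8) => -[u lt_u9] b1 b2 b3.
by do 9?[case: u lt_u9 => [|u] lt_u9 //]; case: b1; case: b2; case: b3.
Qed.

Lemma proper_coloring_odd_cycle n (f : 'I_n -> 'I_2) :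
  odd n -> ~ proper_coloring (@cycle_rel n) f.
Proof.
case: n f => [//|n] f odd_n hf; pose b j := odd (f (inord j)).
have alt j : j < n -> b j.+1 = ~~ b j.
  by move=> lt_jn; apply/ord2_neq_odd/hf/cycle_rel_inordS.
have parity j : j <= n -> b j = b 0 (+) odd j.
  elim: j => [|j IHj] lt_jn; first by rewrite addbF.
  by rewrite alt // IHj ?(ltnW lt_jn) //= addbN.
have wrap : b 0 = ~~ b n by apply/ord2_neq_odd/hf/cycle_rel_inord_wrap.
move: wrap; rewrite (parity n) //; move: odd_n => /= /negbTE ->.
by case: (b 0).
Qed.

Lemma torus_P4_ends m n : 1 < m -> 1 < n ->
  exists u v, P4_ends (torus_rel m n) u v.
Proof.
move=> m_gt1 n_gt1; have [i [i' ii']] := cycle_has_edge m_gt1.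
have [j [j' jj']] := cycle_has_edge n_gt1.
exists (i, j), (i, j'); apply: (P4_ends_cart_square (@cycle_relC m) ii') => //.
  exact: cycle_rel_neq ii'.
exact: cycle_rel_neq jj'.
Qed.

Lemma torus_not_ei_colorable_lt2 m n k : 1 < m -> 1 < n -> k < 2 ->
  ~ ei_colorable (torus_rel m n) k.
Proof.
move=> m_gt1 n_gt1 k_lt2 col; have [u [v uv]] := torus_P4_ends m_gt1 n_gt1.
by move: (ei_colorable_gt1 uv col); rewrite ltnNge -ltnS k_lt2.
Qed.

Lemma torus_not_ei_colorable2 m n : 1 < m -> 1 < n -> odd n ->
  ~ ei_colorable (torus_rel m n) 2.
Proof.
move=> m_gt1 n_gt1 odd_n [f hf]; have [i [i' ii']] := cycle_has_edge m_gt1.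
apply: (proper_coloring_odd_cycle odd_n).
exact: ei_coloring_cart_row hf (@cycle_relC m) ii' (cycle_rel_neq m_gt1 ii')
  (cycle_rel_irr n_gt1).
Qed.

Theorem theorem4p10 (m n : nat) :
  3 <= m -> 3 <= n ->
  (~~ odd m -> ~~ odd n -> chi_ei_eq (torus_rel m n) 2) /\
  (4 <= m -> m != 5 -> m != 7 -> odd n -> 9 <= n -> chi_ei_eq (torus_rel m n) 3).
Proof.
move=> m_ge3 n_ge3; have [m_gt1 n_gt1] : 1 < m /\ 1 < n by lia.
split=> [even_m even_n | m_ge4 m_neq5 m_neq7 odd_n n_ge9]; split.
- apply: (@torus_ei_colorable 1 _ _ _ id) C2_separating => //.
  + by rewrite (negbTE even_m).
  + by rewrite (negbTE even_n).
- by move=> k; apply: torus_not_ei_colorable_lt2.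
- apply: (@torus_ei_colorable 8 _ _ _ C9_coloring) C9_coloring_separating => // odd_m.
  lia.
- move=> k k_lt3; have [k_lt2|k_ge2] := ltnP k 2.
    exact: torus_not_ei_colorable_lt2.
  by rewrite (_ : k = 2); [apply: torus_not_ei_colorable2|lia].
Qed.
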